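(* Assume A or B, let $e\in E_H$, and let $\lambda>0$ satisfy $\mathbb{P}(\omega_e\ge\lambda)>0$. If $A\subset\Omega_H$ is $e$-increasing with $\mathbb{P}(A)>0$, then $\mathbb{P}(A\cap\{\omega_e\ge\lambda\})>0$.
   Context: $V_H=\{(x_1,x_2)\in\mathbb{Z}^2:x_2\ge0\}$, $E_H$ its nearest-neighbour edges, $\Omega_H=[0,\infty)^{E_H}$; write $\omega=(\omega_e,\check\omega)$ with $\check\omega=(\omega_f)_{f\ne e}$. An event $A\subset\Omega_H$ is $e$-increasing if $(\omega_e,\check\omega)\in A$ and $r>0$ imply $(\omega_e+r,\check\omega)\in A$. A probability measure on $[0,\infty)^{E'}$ has the upward finite energy property if for each $e\in E'$ and $\lambda$ with $\mathbb{P}(\omega_e\ge\lambda)>0$, $\mathbb{P}(\omega_e\ge\lambda\mid\check\omega)>0$ almost surely. Assumption A: $\mathbb{P}$ is a product measure on $\Omega_H$ with i.i.d. continuous marginals. Assumption B: $\mathbb{P}$ is the restriction to $E_H$ of a measure $\hat{\mathbb{P}}$ on $[0,\infty)^{\mathcal{E}^2}$ with the upward finite energy property that is ergodic under $\mathbb{Z}^2$-translations, invariant under all symmetries of $\mathbb{Z}^2$, has $\int\omega_e^{2+\alpha}d\hat{\mathbb{P}}<\infty$ for some $\alpha>0$, unique passage times, and bounded limit shape. *)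

From HB Require Import structures.
From mathcomp Require Import all_boot all_order all_algebra.
From mathcomp Require Import all_classical all_reals all_analysis.
Set Implicit Arguments. Unset Strict Implicit. Unset Printing Implicit Defensive.
Import Order.TTheory GRing.Theory Num.Theory.
Local Open Scope classical_set_scope.
Local Open Scope ring_scope.

Definition vtx := (int * int)%type.

(* Nearest-neighbour edges of Z^2 (the set \mathcal{E}^2):
   (v, false) is the edge {v, v + (1,0)}, (v, true) is the edge {v, v + (0,1)}.
   Every nearest-neighbour edge has exactly one such representation. *)
Definition edge2 := (vtx * bool)%type.

Definition ends (e : edge2) : vtx * vtx :=
  (e.1, if e.2 then (e.1.1, e.1.2 + 1) else (e.1.1 + 1, e.1.2)).

(* E_H : edges with both endpoints in V_H = {x_2 >= 0}; for the representation
   above this means exactly that the base vertex has x_2 >= 0. *)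
Definition in_EH (e : edge2) : bool := 0 <= e.1.2.
Definition EH := {e : edge2 | in_EH e}.

Definition adj (u v : vtx) : bool := `|u.1 - v.1| + `|u.2 - v.2| == 1.

Definition edge_of (u v : vtx) : edge2 :=
  if v == (u.1 + 1, u.2) then (u, false)
  else if v == (u.1, u.2 + 1) then (u, true)
  else if u == (v.1 + 1, v.2) then (v, false)
  else (v, true).

Section Config.
Variable R : realType.

Definition rcfg (E : Type) := E -> R.
HB.instance Definition _ (E : Type) := gen_eqMixin (rcfg E).
HB.instance Definition _ (E : Type) := gen_choiceMixin (rcfg E).
HB.instance Definition _ (E : Type) := isPointed.Build (rcfg E) (fun _ => 0).

Definition coord_gen (E : Type) (S : set E) : set (set (rcfg E)) :=
  \bigcup_(f in S) preimage_set_system [set: rcfg E] (fun w => w f) measurable.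

Definition cfg (E : Type) := g_sigma_algebraType (coord_gen [set: E]).
HB.instance Definition _ (E : Type) :=
  Measurable.copy (cfg E) (g_sigma_algebraType (coord_gen [set: E])).

Definition nonneg_cfg (E : Type) : set (cfg E) := [set w | forall f, 0 <= w f].

Variable E : eqType.

Definition upd (w : cfg E) (e : E) (t : R) : cfg E :=
  fun f => if f == e then t else w f.

Definition e_increasing (e : E) (A : set (cfg E)) : Prop :=
  forall (w : cfg E) (r : R), A w -> 0 < r -> A (upd w e (w e + r)).

Definition Wge (e : E) (lam : R) : set (cfg E) := [set w | lam <= w e].

Definition check_sigma (e : E) : set (set (cfg E)) :=
  <<s coord_gen [set f | f != e] >>.

Definition cond_prob_version (P : probability (cfg E) R)
    (G : set (set (cfg E))) (C : set (cfg E)) (g : cfg E -> R) : Prop :=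
  (forall B : set R, measurable B -> G (g @^-1` B)) /\
  (forall S, G S -> P (C `&` S) = (\int[P]_(w in S) (g w)%:E)%E).

Definition upward_finite_energy (P : probability (cfg E) R) : Prop :=
  forall (e : E) (lam : R), (0 < P (Wge e lam))%E ->
    exists g : cfg E -> R,
      cond_prob_version P (check_sigma e) (Wge e lam) g /\
      {ae P, forall w, 0 < g w}.

Definition iid_continuous_product (P : probability (cfg E) R) : Prop :=
  exists mu : probability R R,
    (forall x : R, mu [set x] = 0%E) /\
    forall (F : seq E) (B : E -> set R), uniq F ->
      (forall f, measurable (B f)) ->
      P [set w | forall f, f \in F -> B f (w f)] = (\prod_(f <- F) mu (B f))%E.

End Config.
Arguments nonneg_cfg : clear implicits.

Section FPP.
Variable R : realType.

Fixpoint ptime (w : cfg R edge2) (x : vtx) (p : seq vtx) : R :=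
  match p with
  | [::] => 0
  | y :: q => w (edge_of x y) + ptime w y q
  end.

Definition is_path (x y : vtx) (p : seq vtx) : bool :=
  path adj x p && (last x p == y).

Definition T (w : cfg R edge2) (x y : vtx) : \bar R :=
  ereal_inf [set (ptime w x p)%:E | p in [set p | is_path x y p]].

Definition shift (a : vtx) (w : cfg R edge2) : cfg R edge2 :=
  fun e => w ((e.1.1 + a.1, e.1.2 + a.2), e.2).

Definition lattice_symmetry (phi : vtx -> vtx) : Prop :=
  bijective phi /\ forall u v, adj (phi u) (phi v) = adj u v.

Definition sym_act (phi : vtx -> vtx) (w : cfg R edge2) : cfg R edge2 :=
  fun e => w (edge_of (phi (ends e).1) (phi (ends e).2)).

Definition ergodic_translations (Q : probability (cfg R edge2) R) : Prop :=
  (forall a A, measurable A -> Q (shift a @^-1` A) = Q A) /\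
  (forall A, measurable A -> (forall a, shift a @^-1` A = A) ->
     Q A = 0%E \/ Q A = 1%E).

Definition symmetry_invariant (Q : probability (cfg R edge2) R) : Prop :=
  forall phi, lattice_symmetry phi ->
    forall A, measurable A -> Q (sym_act phi @^-1` A) = Q A.

Definition moment_2_alpha (Q : probability (cfg R edge2) R) : Prop :=
  exists alpha : R, 0 < alpha /\
    forall e, (\int[Q]_w ((`|w e| `^ (2 + alpha))%:E) < +oo)%E.

Definition unique_passage_times (Q : probability (cfg R edge2) R) : Prop :=
  {ae Q, forall w, forall (x y : vtx) (p q : seq vtx),
     is_path x y p -> is_path x y q -> uniq (x :: p) -> uniq (x :: q) ->
     p != q -> ptime w x p != ptime w x q}.

(* time constant g(x) = lim_n E[T(0, n x)] / n, for x in R^2 (with n x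
   rounded down to the lattice) *)
Definition origin : vtx := (0, 0).
Definition lattice_pt (n : nat) (x : R * R) : vtx :=
  (Num.floor (n%:R * x.1), Num.floor (n%:R * x.2)).

Definition time_const (Q : probability (cfg R edge2) R) (x : R * R) : \bar R :=
  limn (fun n : nat =>
    ((n%:R)^-1)%:E * \int[Q]_w T w origin (lattice_pt n x))%E.

Definition bounded_limit_shape (Q : probability (cfg R edge2) R) : Prop :=
  exists M : R, forall x : R * R, (time_const Q x <= 1)%E ->
    `|x.1| <= M /\ `|x.2| <= M.

Definition restrH (w : cfg R edge2) : cfg R EH := fun f => w (val f).

Definition assumptionB (P : probability (cfg R EH) R) : Prop :=
  exists Q : probability (cfg R edge2) R,
    Q (nonneg_cfg R edge2) = 1%E /\
    (forall A : set (cfg R EH), measurable A -> P A = Q (restrH @^-1` A)) /\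
    upward_finite_energy Q /\
    ergodic_translations Q /\
    symmetry_invariant Q /\
    moment_2_alpha Q /\
    unique_passage_times Q /\
    bounded_limit_shape Q.

Definition assumptionA (P : probability (cfg R EH) R) : Prop :=
  iid_continuous_product P.

End FPP.

From HB Require Import structures.
From mathcomp Require Import all_boot all_order all_algebra.
From mathcomp Require Import all_classical all_reals all_analysis.
Import Order.TTheory GRing.Theory Num.Theory.
Local Open Scope classical_set_scope.
Local Open Scope ring_scope.
Set Implicit Arguments. Unset Strict Implicit. Unset Printing Implicit Defensive.

(* Write S for the event {w : (lam, w_e^c) in A}: it only depends on the
   coordinates other than e.  Since A is e-increasing, A is contained in
   (A /\ {w_e >= lam}) \/ S, and {w_e >= lam} /\ S is contained in A.  If P(S) = 0
   the first inclusion gives P(A /\ {w_e >= lam}) >= P(A) > 0.  Otherwise it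
   suffices that {w_e >= lam} meets every non-null sigma(w_e^c)-event in a
   non-null set: under A this is independence of w_e from the other coordinates
   (a pi-lambda argument over cylinders), under B it holds because
   P(w_e >= lam | w_e^c) is a.s. positive, after pulling everything back to the
   measure on the whole lattice. *)

Section Measurability.
Variable R : realType.

(* Covers both [upd _ e l] (phi = id, c = pred1 e) and [restrH] (phi = val, c = false). *)
Lemma sigma_coord_gen_patch (E1 E2 : Type) (D : set E1) (phi : E2 -> E1)
    (c : E2 -> bool) (l : R) :
  (forall f, ~~ c f -> D (phi f)) -> forall X : set (cfg R E2), measurable X ->
  <<s coord_gen D >>
    ((fun w : cfg R E1 => (fun f => if c f then l else w (phi f)) : cfg R E2) @^-1` X).
Proof.
move=> phiD X mX.
set M := (fun w : cfg R E1 => _ : cfg R E2).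
suff mM : measurable_fun [set: g_sigma_algebraType (coord_gen D)] M.
  by have := mM measurableT X mX; rewrite setTI.
apply: (@measurability _ _ _ (cfg R E2) _ _ (coord_gen [set: E2])) => //.
move=> _ [Y [f _ [B mB <-]] <-].
apply: measurableI => //; rewrite setTI.
case cf: (c f).
- have [Bl|nBl] := pselect (B l).
    rewrite (_ : _ @^-1` _ = setT) //.
    by apply/seteqP; split => w //= _; rewrite /M cf.
  rewrite (_ : _ @^-1` _ = set0); first exact: measurable0.
  by apply/seteqP; split => w //=; rewrite /M cf.
- apply: sub_sigma_algebra; exists (phi f); first by apply: phiD; rewrite cf.
  by exists B => //; rewrite setTI; apply/seteqP; split => w /=; rewrite /M cf.
Qed.

Variable E : eqType.

Lemma measurable_coord_preimage (f : E) (B : set R) : measurable B ->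
  measurable ((fun w : cfg R E => w f) @^-1` B).
Proof.
move=> mB; apply: sub_sigma_algebra; exists f => //; exists B => //.
by rewrite setTI.
Qed.

Lemma measurable_Wge (e : E) (lam : R) : measurable (Wge e lam).
Proof.
have -> : Wge e lam = (fun w : cfg R E => w e) @^-1` `[lam, +oo[%classic.
  by apply/seteqP; split => w; rewrite /= in_itv /= andbT.
exact: measurable_coord_preimage _ _ (measurable_itv _).
Qed.

Lemma check_sigma_measurable (e : E) (S : set (cfg R E)) :
  check_sigma e S -> measurable S.
Proof. by apply: sub_sigma_algebra2 => Y [f _ h]; exists f. Qed.

Definition upd_section (e : E) (lam : R) (A : set (cfg R E)) : set (cfg R E) :=
  (fun w => upd w e lam) @^-1` A.

Lemma check_sigma_upd_section (e : E) (lam : R) (A : set (cfg R E)) :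
  measurable A -> check_sigma e (upd_section e lam A).
Proof.
move=> mA; rewrite /check_sigma /upd_section /upd.
exact: (@sigma_coord_gen_patch E E [set f | f != e] id (fun f => f == e) lam (fun f h => h) _ mA).
Qed.

End Measurability.

Section Update.
Variables (R : realType) (E : eqType).
Implicit Types (w : cfg R E) (e : E) (a b : R).

Lemma upd_eq w e a : upd w e a e = a.
Proof. by rewrite /upd eqxx. Qed.

Lemma upd_upd w e a b : upd (upd w e a) e b = upd w e b.
Proof. by apply: funext => f; rewrite /upd; case: eqP. Qed.

Lemma upd_id w e : upd w e (w e) = w.
Proof. by apply: funext => f; rewrite /upd; case: eqP => // ->. Qed.

Lemma e_increasing_upd (A : set (cfg R E)) w e a b :
  e_increasing e A -> a <= b -> A (upd w e a) -> A (upd w e b).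
Proof.
move=> incA; rewrite le_eqVlt => /predU1P[<- //|ab] Aa.
have := incA _ (b - a) Aa; rewrite subr_gt0 => /(_ ab).
by rewrite upd_upd upd_eq addrC subrK.
Qed.

Lemma e_increasing_subU_upd_section (A : set (cfg R E)) e lam :
  e_increasing e A -> A `<=` (A `&` Wge e lam) `|` upd_section e lam A.
Proof.
move=> incA w Aw; have [le|lt] := leP lam (w e); first by left.
by right; apply: (e_increasing_upd incA (ltW lt)); rewrite upd_id.
Qed.

Lemma Wge_upd_section_sub (A : set (cfg R E)) e lam :
  e_increasing e A -> Wge e lam `&` upd_section e lam A `<=` A `&` Wge e lam.
Proof.
move=> incA w [le Aw]; split => //.
by rewrite -(upd_id w e); exact: (e_increasing_upd incA le).
Qed.

End Update.

Section PositiveLevelSet.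
Context d (T : measurableType d) (R : realType) (mu : {measure set T -> \bar R}).
Local Open Scope ereal_scope.

Lemma ae_gt0_level_set_gt0 (D : set T) (g : T -> R) :
  measurable D -> measurable_fun D g -> {ae mu, forall x, (0 < g x)%R} ->
  0 < mu D -> exists n : nat, 0 < mu (D `&` g @^-1` `[(n.+1%:R^-1 : R)%R, +oo[).
Proof.
move=> mD mg gpos muD; apply/not_existsP => null.
set Dn := fun n : nat => D `&` g @^-1` `[(n.+1%:R^-1 : R)%R, +oo[.
have Dn0 n : mu (Dn n) = 0.
  apply/eqP; rewrite eq_le measure_ge0 andbT leNgt; apply/negP.
  exact: null.
have : mu.-negligible D.
  apply: (@negligibleS _ _ _ _ ((\bigcup_n Dn n) `|` ~` [set x | (0 < g x)%R])).
    move=> x Dx; have [gx|] := pselect (0 < g x)%R; last by right.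
    left; exists (Num.truncn (g x)^-1) => //; split => //=.
    rewrite in_itv /= andbT.
    have := truncnS_gt (g x)^-1; rewrite -invf_plt ?posrE ?invr_gt0 ?ltr0n //.
    exact: ltW.
  apply: negligibleU => //; apply: negligible_bigcup => n.
  by apply/negligibleP; [exact: mg (measurable_itv _)|exact: Dn0].
by move/negligibleP => /(_ mD) D0; rewrite D0 ltxx in muD.
Qed.

End PositiveLevelSet.

Section WgeMeetsCheckSigma.
Variables (R : realType) (E : eqType).
Local Open Scope ereal_scope.

Definition Wge_meets_check_sigma (P : probability (cfg R E) R) (e : E) (lam : R) :=
  forall S, check_sigma e S -> 0 < P S -> 0 < P (Wge e lam `&` S).

Lemma e_increasing_Wge_gt0 (P : probability (cfg R E) R) e lam A :
  measurable A -> e_increasing e A -> 0 < P A ->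
  Wge_meets_check_sigma P e lam -> 0 < P (A `&` Wge e lam).
Proof.
move=> mA incA PA meets.
set S := upd_section e lam A.
have cS : check_sigma e S by exact: check_sigma_upd_section.
have mS := check_sigma_measurable cS.
have mW := measurable_Wge e lam.
have mAW : measurable (A `&` Wge e lam) by exact: measurableI.
have [S0|Spos] := eqVneq (P S) 0.
  have : P A <= P (A `&` Wge e lam) + P S.
    apply: le_trans (measureU2 _ mAW mS); apply: le_measure; rewrite ?inE //.
    - exact: measurableU.
    - exact: e_increasing_subU_upd_section.
  by rewrite S0 adde0 => /(lt_le_trans PA).
apply: (lt_le_trans (meets S cS _)); first by rewrite lt0e Spos measure_ge0.
apply: le_measure; rewrite ?inE //; first exact: measurableI.
exact: Wge_upd_section_sub.
Qed.

Lemma cond_prob_gt0_Wge_meets (P : probability (cfg R E) R) e lam g :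
  cond_prob_version P (check_sigma e) (Wge e lam) g ->
  {ae P, forall w, (0 < g w)%R} -> Wge_meets_check_sigma P e lam.
Proof.
move=> [gm gint] gpos S cS PS.
have mg : measurable_fun [set: cfg R E] g.
  by move=> _ Y mY; rewrite setTI; apply: check_sigma_measurable; exact: gm.
have [n Pn] := ae_gt0_level_set_gt0 (check_sigma_measurable cS)
  (measurable_funTS mg) gpos PS.
set Sn := S `&` g @^-1` `[(n.+1%:R^-1 : R)%R, +oo[.
have cSn : check_sigma e Sn.
  apply: (@measurableI _ (g_sigma_algebraType (coord_gen [set f : E | f != e]))) => //.
  exact: gm (measurable_itv _).
have mSn := check_sigma_measurable cSn.
apply: (@lt_le_trans _ _ (P (Wge e lam `&` Sn))); last first.
  apply: le_measure; rewrite ?inE; last by move=> w [? []].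
  - exact: measurableI (measurable_Wge e lam) mSn.
  - exact: measurableI (measurable_Wge e lam) (check_sigma_measurable cS).
rewrite gint //.
apply: (@lt_le_trans _ _ (\int[P]_(w in Sn) (n.+1%:R^-1 : R)%:E)).
  by rewrite integral_cst //; apply: mule_gt0 => //; rewrite lte_fin invr_gt0 ltr0n.
apply: ge0_le_integral => //.
- exact/measurable_realfun.measurable_EFinP/measurable_funTS.
- by move=> w [_ /=]; rewrite in_itv /= andbT lee_fin.
Qed.

End WgeMeetsCheckSigma.

Section IndependentSystem.
Context d (T : measurableType d) (R : realType) (P : probability T R).
Local Open Scope ereal_scope.

Lemma lambda_system_indep (W : set T) : measurable W ->
  lambda_system setT [set X | measurable X /\ P (W `&` X) = P W * P X].
Proof.
move=> mW; have finP X : measurable X -> P X \is a fin_num by exact: fin_num_measure.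
apply/dynkin_lambda_system; split.
- by split => //; rewrite setIT probability_setT mule1.
- move=> X [mX WX]; split; first exact: measurableC.
  have WD : P W = P (W `\` X) + P W * P X by rewrite -WX; exact: measureDI.
  rewrite -setDE probability_setC // muleBr ?finP // mule1 {1}WD addeK //.
  by rewrite fin_numM ?finP.
- move=> F tF hF; split; first by apply: bigcup_measurable => k _; exact: (hF k).1.
  rewrite setI_bigcupr !measure_bigcup //; first last.
  + exact: trivIset_setIl.
  + by move=> k _; apply: measurableI => //; exact: (hF k).1.
  + by move=> k _; exact: (hF k).1.
  rewrite (eq_eseriesr (g := fun k => P W * P (F k))); last by move=> k _; exact: (hF k).2.
  by rewrite -[P W]fineK ?finP // nneseriesZl.
Qed.

End IndependentSystem.

Section IidProduct.
Variables (R : realType) (E : eqType).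
Local Open Scope ereal_scope.

Definition cyl (F : seq E) (B : E -> set R) : set (cfg R E) :=
  [set w | forall f, f \in F -> B f (w f)].

Lemma measurable_cyl F B : (forall f, measurable (B f)) -> measurable (cyl F B).
Proof.
move=> mB; elim: F => [|f F IH].
  by rewrite (_ : cyl [::] B = setT) //; apply/seteqP; split => w //= _ f.
rewrite (_ : cyl (f :: F) B = ((fun w : cfg R E => w f) @^-1` B f) `&` cyl F B).
  by apply: measurableI => //; exact: measurable_coord_preimage.
apply/seteqP; split => w /=.
  move=> h; split; first by apply: h; rewrite inE eqxx.
  by move=> g gF; apply: h; rewrite inE gF orbT.
by move=> [h1 h2] g; rewrite inE => /orP[/eqP -> //|]; exact: h2.
Qed.

Definition cylinders_off (e : E) : set (set (cfg R E)) :=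
  [set X | exists F B, [/\ uniq F, (forall f, measurable (B f)),
     (forall f, f \in F -> f != e) & X = cyl F B]].

Lemma setI_closed_cylinders_off e : setI_closed (cylinders_off e).
Proof.
move=> X1 X2 [F1 [B1 [u1 m1 n1 ->]]] [F2 [B2 [u2 m2 n2 ->]]].
pose B f := (if f \in F1 then B1 f else setT) `&` (if f \in F2 then B2 f else setT).
exists (undup (F1 ++ F2)), B; split.
- exact: undup_uniq.
- by move=> f; apply: measurableI; case: ifP.
- by move=> f; rewrite mem_undup mem_cat => /orP[/n1|/n2].
apply/seteqP; split => w /=.
  by move=> [h1 h2] f _; split; case: ifP => // h; [exact: h1|exact: h2].
move=> h; split => f hf.
  by have [] := h f; rewrite ?mem_undup ?mem_cat ?hf // hf.
by have [] := h f; rewrite ?mem_undup ?mem_cat ?hf ?orbT // hf.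
Qed.

Lemma check_sigma_sub_cylinders_off e : check_sigma e `<=` <<s cylinders_off e >>.
Proof.
apply: sub_sigma_algebra2 => Y [f /= fe [B mB <-]].
exists [:: f], (fun _ => B); split => //.
- by move=> g; rewrite inE => /eqP ->.
apply/seteqP; split => w /=.
  by move=> [_ h] g; rewrite inE => /eqP ->.
by move=> h; split => //; apply: h; rewrite inE.
Qed.

Variables (P : probability (cfg R E) R) (mu : probability R R).
Hypothesis P_iid : forall (F : seq E) (B : E -> set R), uniq F ->
  (forall f, measurable (B f)) ->
  P [set w | forall f, f \in F -> B f (w f)] = \prod_(f <- F) mu (B f).

Lemma iid_Wge_indep_cylinder e lam X :
  cylinders_off e X -> P (Wge e lam `&` X) = P (Wge e lam) * P X.
Proof.
move=> [F [B [uF mB nF ->]]].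
pose B' f := if f == e then `[lam, +oo[%classic else B f.
have mB' f : measurable (B' f) by rewrite /B'; case: ifP.
have BF f : f \in F -> B' f = B f by move=> /nF /negbTE fe; rewrite /B' fe.
have Be : B' e = `[lam, +oo[%classic by rewrite /B' eqxx.
have -> : Wge e lam = cyl [:: e] B'.
  apply/seteqP; split => w /=.
    by move=> h f; rewrite inE => /eqP ->; rewrite Be /= in_itv /= andbT.
  by move/(_ e); rewrite inE eqxx Be /= in_itv /= andbT; apply.
have -> : cyl [:: e] B' `&` cyl F B = cyl (e :: F) B'.
  apply/seteqP; split => w /=.
    move=> [h1 h2] f; rewrite inE => /orP[/eqP ->|fF]; first exact/h1/mem_head.
    by rewrite BF //; exact: h2.
  move=> h; split => f; rewrite ?inE => fF; first by apply: h; rewrite inE fF.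
  by rewrite -BF //; apply: h; rewrite inE fF orbT.
have ue : uniq (e :: F) by rewrite /= uF andbT; apply/negP => /nF; rewrite eqxx.
rewrite /cyl !P_iid // big_cons big_seq1; congr (_ * _).
by apply: eq_big_seq => f /BF ->.
Qed.

Lemma iid_Wge_indep e lam S :
  check_sigma e S -> P (Wge e lam `&` S) = P (Wge e lam) * P S.
Proof.
have indep : <<s cylinders_off e >> `<=`
    [set X | measurable X /\ P (Wge e lam `&` X) = P (Wge e lam) * P X].
  apply: lambda_system_subset => //.
  - exact: setI_closed_cylinders_off.
  - exact: lambda_system_indep (measurable_Wge e lam).
  - move=> X cX; split; last exact: iid_Wge_indep_cylinder.
    by case: cX => F [B [_ mB _ ->]]; exact: measurable_cyl.
by move=> /check_sigma_sub_cylinders_off /indep [].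
Qed.

Lemma iid_Wge_meets_check_sigma e lam :
  0 < P (Wge e lam) -> Wge_meets_check_sigma P e lam.
Proof. by move=> PW S cS PS; rewrite iid_Wge_indep // mule_gt0. Qed.

End IidProduct.

Section HalfPlane.
Variable R : realType.

Lemma measurable_restrH_preimage (A : set (cfg R EH)) :
  measurable A -> measurable (@restrH R @^-1` A).
Proof. exact: (@sigma_coord_gen_patch R edge2 EH setT val (fun _ => false) 0 (fun _ _ => I)). Qed.

Lemma e_increasing_restrH (e : EH) (A : set (cfg R EH)) :
  e_increasing e A -> e_increasing (val e) (@restrH R @^-1` A).
Proof.
move=> incA w r Aw r0; have := incA (restrH w) r Aw r0.
by congr A; apply: funext => f; rewrite /restrH /upd val_eqE.
Qed.

End HalfPlane.

Theorem lemma4p6 (R : realType) (P : probability (cfg R EH) R)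
  (hOmega : P (nonneg_cfg R EH) = 1%E)
  (hAB : assumptionA P \/ assumptionB P)
  (e : EH) (lam : R) (hlam : 0 < lam) (hPlam : (0 < P (Wge e lam))%E)
  (A : set (cfg R EH)) (mA : measurable A) (AOmega : A `<=` nonneg_cfg R EH)
  (incA : e_increasing e A) (PA : (0 < P A)%E) :
  (0 < P (A `&` Wge e lam))%E.
Proof.
case: hAB => [[mu [_ P_iid]]|[Q [_ [PQ [ufe _]]]]].
  exact: e_increasing_Wge_gt0 mA incA PA (iid_Wge_meets_check_sigma P_iid hPlam).
have QW : (0 < Q (Wge (val e) lam))%E by move: hPlam; rewrite PQ //; exact: measurable_Wge.
have [g [g_cond g_pos]] := ufe (val e) lam QW.
rewrite PQ; last exact: measurableI mA (measurable_Wge e lam).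
apply: e_increasing_Wge_gt0 (measurable_restrH_preimage mA) (e_increasing_restrH incA) _
  (cond_prob_gt0_Wge_meets g_cond g_pos).
by rewrite -PQ.
Qed.
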